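(* Let $n\ge2$ and $0\le m\le n(n-1)$. For each vertex $i$ of $\mathbb G(n,m)$ with in-degree $d_i$, the tails of its $d_i$ incoming arcs are exactly the $d_i$ smallest elements of $\{1,\dots,n\}\setminus\{i\}$.
   Context: For integers $n\ge2$ and $0\le m\le n(n-1)$, $\mathbb G(n,m)$ is the simple directed graph on vertex set $\{1,\dots,n\}$ whose arc set is $\{(\lceil \frac{i}{n-1}\rceil,\ n-((i-1)\bmod n)) : i=1,\dots,m\}$, where an arc $(j,k)$ goes from tail $j$ to head $k$ and $a\bmod b\in\{0,\dots,b-1\}$; these $m$ pairs are pairwise distinct pairs of distinct vertices. *)

From mathcomp Require Import all_boot.
Set Implicit Arguments. Unset Strict Implicit. Unset Printing Implicit Defensive.

Definition ceil_div (a b : nat) : nat := (a + b - 1) %/ b.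

(* The i-th arc (i = 1..m) of G(n,m): (ceil(i/(n-1)), n - ((i-1) mod n)). *)
Definition arc_tail (n i : nat) : nat := ceil_div i (n - 1).
Definition arc_head (n i : nat) : nat := n - ((i - 1) %% n).

Definition arc_indices (m : nat) : seq nat := iota 1 m.

Definition in_tails (n m v : nat) : seq nat :=
  [seq arc_tail n i | i <- arc_indices m & arc_head n i == v].

Definition in_degree (n m v : nat) : nat :=
  count (fun i => arc_head n i == v) (arc_indices m).

Definition smallest_others (n v d : nat) : seq nat :=
  take d [seq j <- iota 1 n | j != v].

From mathcomp Require Import all_boot zify.

Set Implicit Arguments.
Unset Strict Implicit.
Unset Printing Implicit Defensive.

(* Write arc i as i - 1 = q (n - 1) + s with s < n - 1: its tail is q + 1 and its head h
   satisfies q + 1 - h = s + 1 (mod n).  As s + 1 ranges over 1, ..., n - 1, the n - 1 arcs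
   with tail t enter the n - 1 vertices other than t, one each, the arc from t to v being
   arc number (t - 1)(n - 1) + ((t - v) mod n).  That number increases with t, so the arcs
   into v among the first m come from an initial segment of the vertices other than v. *)

Lemma filter_downward_closed (T : eqType) (r : rel T) (P : pred T) (s : seq T) :
  pairwise r s -> {in s &, forall x y, r x y -> P y -> P x} ->
  filter P s = take (count P s) s.
Proof.
elim: s => [|x s IHs] //= /andP[rx rs] Pdown.
case: ifP => Px.
  rewrite add1n IHs // => y z ys zs.
  by apply: Pdown; rewrite inE ?ys ?zs orbT.
have noP : ~~ has P s.
  apply/hasP=> -[y ys Py]; suff : P x by rewrite Px.
  by apply: (Pdown x y); rewrite ?inE ?eqxx ?ys ?orbT ?(allP rx).
have c0 : count P s = 0 by apply/eqP; rewrite -leqn0 leqNgt -has_count.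
by rewrite c0; apply/eqP; rewrite -[_ == _]negbK -has_filter.
Qed.

Definition arc_offset (n t v : nat) : nat := (t + n - v) %% n.

Definition arc_index (n t v : nat) : nat := t.-1 * (n - 1) + arc_offset n t v.

Lemma arc_offset_inj n t v w : 0 < v <= n -> 0 < w <= n ->
  arc_offset n t v = arc_offset n t w -> v = w.
Proof.
move=> /andP[v_gt0 vn] /andP[w_gt0 wn]; rewrite /arc_offset -!addnBA //.
by move=> /eqP; rewrite eqn_modDl !modn_small; lia.
Qed.

Lemma arc_offset_gt0 n t v : 0 < t <= n -> 0 < v <= n -> t != v -> 0 < arc_offset n t v.
Proof.
move=> t_range v_range; rewrite lt0n; apply: contra => /eqP offset0.
apply/eqP/(@arc_offset_inj n t _ _ t_range v_range).
by rewrite offset0 /arc_offset addKn modnn.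
Qed.

Section ArcArithmetic.

Variable n : nat.
Hypothesis n_gt1 : 1 < n.

Lemma arc_tailE i : 0 < i -> arc_tail n i = (i.-1 %/ (n - 1)).+1.
Proof.
move=> i_gt0; rewrite /arc_tail /ceil_div.
have -> : i + (n - 1) - 1 = i.-1 + (n - 1) by lia.
by rewrite divnDr ?dvdnn // divnn subn_gt0 n_gt1 addn1.
Qed.

Lemma arc_tail_le i : 0 < i -> i <= n * (n - 1) -> arc_tail n i <= n.
Proof. by move=> i_gt0 i_le; rewrite arc_tailE // ltn_divLR; lia. Qed.

Lemma arc_head_gt0 i : 0 < arc_head n i.
Proof. by rewrite subn_gt0 ltn_pmod // ltnW. Qed.

Lemma arc_offset_tail_head i : 0 < i ->
  arc_offset n (arc_tail n i) (arc_head n i) = (i.-1 %% (n - 1)).+1.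
Proof.
move=> i_gt0; rewrite arc_tailE // /arc_offset /arc_head [i - 1]subn1.
set q := i.-1 %/ (n - 1); set s := i.-1 %% (n - 1).
have s_lt : s < n - 1 by rewrite ltn_mod; lia.
have rem_le : i.-1 %% n <= n by rewrite ltnW // ltn_pmod // ltnW.
rewrite subnBA // addnAC addnK -(modnMDl (i.-1 %/ n)) addnCA -divn_eq.
have -> : q.+1 + i.-1 = q * n + s.+1 by rewrite {1}(divn_eq i.-1 (n - 1)) -/q -/s; nia.
by rewrite modnMDl modn_small //; lia.
Qed.

Lemma arc_tail_neq_head i : 0 < i -> arc_tail n i != arc_head n i.
Proof.
move=> i_gt0; apply/eqP=> eq_tail_head; have := arc_offset_tail_head i_gt0.
by rewrite eq_tail_head /arc_offset addKn modnn.
Qed.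

Lemma arc_index_tail_head i : 0 < i -> arc_index n (arc_tail n i) (arc_head n i) = i.
Proof.
move=> i_gt0; rewrite /arc_index arc_offset_tail_head // {1}arc_tailE //=.
by rewrite addnS -divn_eq prednK.
Qed.

Lemma arc_tail_index t v : 0 < t -> 0 < arc_offset n t v -> arc_tail n (arc_index n t v) = t.
Proof.
have := ltn_pmod (t + n - v) (ltnW n_gt1).
rewrite /arc_index /arc_offset; move: (_ %% n) => r r_lt t_gt0 r_gt0.
rewrite arc_tailE ?addn_gt0 ?r_gt0 ?orbT // -(prednK r_gt0) addnS /=.
by rewrite divnMDl ?divn_small ?addn0 ?prednK //; lia.
Qed.

Lemma arc_head_index t v : 0 < t -> 0 < v <= n -> 0 < arc_offset n t v ->
  arc_head n (arc_index n t v) = v.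
Proof.
move=> t_gt0 v_range offset_gt0; set i := arc_index n t v.
have i_gt0 : 0 < i by rewrite addn_gt0 offset_gt0 orbT.
have := arc_index_tail_head i_gt0.
rewrite arc_tail_index // {2}/i /arc_index => /addnI; apply: arc_offset_inj => //.
by rewrite arc_head_gt0 leq_subr.
Qed.

Lemma arc_index_mono x y v : 0 < x < y -> arc_index n x v <= arc_index n y v.
Proof.
move=> /andP[x_gt0 xy]; have := ltn_pmod (x + n - v) (ltnW n_gt1).
rewrite /arc_index /arc_offset; move: (_ %% n) => r r_lt.
by apply: leq_trans (leq_addr _ _); nia.
Qed.

End ArcArithmetic.

Definition other_vertices (n v : nat) : seq nat := [seq j <- iota 1 n | j != v].

Section InTails.

Variables n m v : nat.
Hypothesis n_gt1 : 1 < n.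

Lemma in_tails_uniq : uniq (in_tails n m v).
Proof.
rewrite map_inj_in_uniq ?filter_uniq ?iota_uniq // => i j.
rewrite !mem_filter !mem_iota => /andP[/eqP head_i /andP[i_gt0 _]].
move=> /andP[/eqP head_j /andP[j_gt0 _]] eq_tail.
rewrite -(arc_index_tail_head n_gt1 i_gt0) -(arc_index_tail_head n_gt1 j_gt0).
by rewrite eq_tail head_i head_j.
Qed.

Hypotheses (m_le : m <= n * (n - 1)) (v_range : 0 < v <= n).

Lemma mem_in_tails t :
  (t \in in_tails n m v) = (t \in other_vertices n v) && (arc_index n t v <= m).
Proof.
rewrite mem_filter mem_iota add1n ltnS; apply/mapP/idP.
  move=> [i]; rewrite mem_filter mem_iota add1n ltnS.
  move=> /andP[/eqP head_i /andP[i_gt0 i_le]] ->.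
  rewrite -head_i arc_tail_neq_head // arc_index_tail_head // i_le.
  by rewrite arc_tail_le ?(leq_trans i_le m_le) // arc_tailE.
move=> /andP[/andP[tv t_range] index_le]; have /andP[t_gt0 _] := t_range.
have offset_gt0 := arc_offset_gt0 t_range v_range tv.
exists (arc_index n t v); last by rewrite arc_tail_index.
rewrite mem_filter mem_iota add1n ltnS arc_head_index // eqxx index_le.
by rewrite addn_gt0 offset_gt0 orbT.
Qed.

Lemma in_degree_count :
  in_degree n m v = count (fun t => arc_index n t v <= m) (other_vertices n v).
Proof.
rewrite /in_degree -size_filter -(size_map (arc_tail n)) -size_filter.
apply/perm_size/uniq_perm; rewrite ?filter_uniq ?iota_uniq ?in_tails_uniq // => t.
by rewrite mem_filter andbC mem_in_tails.
Qed.

End InTails.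

Theorem lemma11 (n m : nat) :
  2 <= n -> m <= n * (n - 1) ->
  forall v : nat, 1 <= v <= n ->
    in_tails n m v =i smallest_others n v (in_degree n m v).
Proof.
move=> n_gt1 m_le v v_range t.
rewrite /smallest_others -/(other_vertices n v) in_degree_count //.
rewrite -(@filter_downward_closed _ ltn).
- by rewrite mem_filter andbC mem_in_tails.
- by rewrite -sorted_pairwise ?sorted_filter ?iota_ltn_sorted //; exact: ltn_trans.
- move=> x y; rewrite mem_filter mem_iota => /andP[_ /andP[x_gt0 _]] _ xy.
  by apply: leq_trans; apply: arc_index_mono; rewrite // x_gt0.
Qed.
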